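(* In a qubit stabilizer subsystem code with encoded qubits $\mathcal{H}_e=\bigotimes_{j=1}^{n_L}\mathcal{H}_j$, let $S\subseteq\{1,\dots,n_L\}$ and let $R$ be a region of physical qubits that obeys complementary recovery and is dressed-cleanable with respect to the logical subsystem given by $S$. Then $R$ is correctable with respect to $S$.
   Context: Stabilizer code: abelian subgroup of the Pauli group not containing $-\mathrm{Id}$, code space its $+1$ eigenspace, encoding isometry $V$ from the encoded space $\bigotimes_j\mathcal{H}_j$ of encoded qubits (with a basis such that codespace-preserving physical Paulis implement encoded Paulis); $\Pi=VV^\dagger$. For $S\subseteq\{1,\dots,n_L\}$, the logical subsystem is $\mathcal{H}_L=\bigotimes_{j\in S}\mathcal{H}_j$ and the junk subsystem $\mathcal{H}_J=\bigotimes_{j\notin S}\mathcal{H}_j$. $A$ is CSP if $[A,\Pi]=0$; dressed-CSP if moreover $V^\dagger AV=A_L\otimes A_J$; bare-CSP if also $A_J=\mathrm{Id}_J$. Supported on $R$: of the form $A_R\otimes\mathrm{Id}_{R^c}$. $R$ is correctable w.r.t. $S$ if every $A_L\in\mathcal{B}(\mathcal{H}_L)$ is implemented as $A_L\otimes\mathrm{Id}_J$ by a bare-CSP operator supported on $R^c$; dressed-cleanable w.r.t. $S$ if every Pauli $P_L$ on $\mathcal{H}_L$ is implemented as $P_L\otimes P_J$ (some $P_J$) by a dressed-CSP operator supported on $R^c$. Maximal entanglement wedge: $\mathcal{E}[R]$ is the set of $j$ such that $R^c$ is correctable w.r.t. $\{j\}$. $R$ obeys complementary recovery if $\mathcal{E}[R]\cup\mathcal{E}[R^c]=\{1,\dots,n_L\}$.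 *)

From HB Require Import structures.
From mathcomp Require Import all_boot all_order all_algebra all_field.
Set Implicit Arguments. Unset Strict Implicit. Unset Printing Implicit Defensive.
Import Order.TTheory GRing.Theory Num.Theory.
Local Open Scope ring_scope.

(* Complex scalars: algebraic complex numbers algC.
   An m-qubit Hilbert space is C^(2^m); basis index x : 'I_(2^m), with
   qubit q carrying bit  odd (x %/ 2^q). *)

Definition qbit (m : nat) (x : 'I_(2 ^ m)) (q : 'I_m) : bool := odd (x %/ 2 ^ q).

Definition mask (m : nat) (T : {set 'I_m}) (x : 'I_(2 ^ m)) : {ffun 'I_m -> bool} :=
  [ffun q => (q \in T) && qbit x q].

(* An operator on the qubits of T, given by its matrix entries on labels of T *)
Definition subop (m : nat) := {ffun 'I_m -> bool} -> {ffun 'I_m -> bool} -> algC.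

Definition id_op (m : nat) : subop m := fun u v => (u == v)%:R.

(* Pauli operator i^k X^a Z^b acting on the qubits of T *)
Definition pauli_op (m : nat) (T : {set 'I_m}) (k : nat) (a b : {ffun 'I_m -> bool})
  : subop m :=
  fun u v => 'i ^+ k *
    \prod_(q in T) ((u q == (v q (+) a q))%:R * (-1) ^+ (b q && v q)).

(* M = M_T (x) M_{T^c} with respect to the qubit partition T, T^c *)
Definition is_tensor (m : nat) (T : {set 'I_m}) (M : 'M[algC]_(2 ^ m))
    (fT fTc : subop m) : Prop :=
  forall x y : 'I_(2 ^ m),
    M x y = fT (mask T x) (mask T y) * fTc (mask (~: T) x) (mask (~: T) y).

Definition pauli_mx (m : nat) (k : nat) (a b : {ffun 'I_m -> bool}) : 'M[algC]_(2 ^ m) :=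
  \matrix_(x, y) pauli_op setT k a b (mask setT x) (mask setT y).

Definition is_pauli (m : nat) (M : 'M[algC]_(2 ^ m)) : Prop :=
  exists k a b, M = pauli_mx k a b.

Definition adj (p q : nat) (M : 'M[algC]_(p, q)) : 'M[algC]_(q, p) :=
  (map_mx (fun z => z^*) M)^T.

Definition stabilizer_group (n : nat) (G : 'M[algC]_(2 ^ n) -> Prop) : Prop :=
  (forall g, G g -> is_pauli g) /\
  [/\ G 1%:M,
      (forall g h, G g -> G h -> G (g *m h)),
      (forall g, G g -> G (adj g)),
      (forall g h, G g -> G h -> g *m h = h *m g)
    & ~ G (- 1%:M)].

(* V : C^(2^nL) -> C^(2^n) is an encoding isometry for the stabilizer code G:
   an isometry onto the code space (the +1 eigenspace of G), in a basis of the
   encoded qubits such that codespace-preserving physical Paulis implement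
   encoded Paulis. *)
Definition encoding (n nL : nat) (G : 'M[algC]_(2 ^ n) -> Prop)
    (V : 'M[algC]_(2 ^ n, 2 ^ nL)) : Prop :=
  [/\ adj V *m V = 1%:M,
      (forall v : 'cV[algC]_(2 ^ n),
          (forall g, G g -> g *m v = v) <-> exists w : 'cV[algC]_(2 ^ nL), v = V *m w)
    & (forall P : 'M[algC]_(2 ^ n), is_pauli P ->
          P *m (V *m adj V) = (V *m adj V) *m P -> is_pauli (adj V *m P *m V))].

Definition CSP (n nL : nat) (V : 'M[algC]_(2 ^ n, 2 ^ nL)) (A : 'M[algC]_(2 ^ n)) : Prop :=
  A *m (V *m adj V) = (V *m adj V) *m A.

Definition supported_on (n : nat) (R : {set 'I_n}) (A : 'M[algC]_(2 ^ n)) : Prop :=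
  exists AR : subop n, is_tensor R A AR (@id_op n).

Definition correctable (n nL : nat) (V : 'M[algC]_(2 ^ n, 2 ^ nL))
    (R : {set 'I_n}) (S : {set 'I_nL}) : Prop :=
  forall AL : subop nL, exists A : 'M[algC]_(2 ^ n),
    [/\ CSP V A, supported_on (~: R) A & is_tensor S (adj V *m A *m V) AL (@id_op nL)].

Definition dressed_cleanable (n nL : nat) (V : 'M[algC]_(2 ^ n, 2 ^ nL))
    (R : {set 'I_n}) (S : {set 'I_nL}) : Prop :=
  forall (k : nat) (a b : {ffun 'I_nL -> bool}),
  exists (kJ : nat) (aJ bJ : {ffun 'I_nL -> bool}) (A : 'M[algC]_(2 ^ n)),
    [/\ CSP V A, supported_on (~: R) A &
        is_tensor S (adj V *m A *m V) (pauli_op S k a b) (pauli_op (~: S) kJ aJ bJ)].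

Definition in_wedge (n nL : nat) (V : 'M[algC]_(2 ^ n, 2 ^ nL)) (R : {set 'I_n})
    (j : 'I_nL) : Prop :=
  correctable V (~: R) [set j].

Definition complementary_recovery (n nL : nat) (V : 'M[algC]_(2 ^ n, 2 ^ nL))
    (R : {set 'I_n}) : Prop :=
  forall j : 'I_nL, in_wedge V R j \/ in_wedge V (~: R) j.

From Pilot Require Import Defs.
From mathcomp Require Import all_boot all_order all_algebra all_field.
Set Implicit Arguments. Unset Strict Implicit. Unset Printing Implicit Defensive.
Import Order.TTheory GRing.Theory Num.Theory.
Local Open Scope ring_scope.
Local Notation mask := Defs.mask.

(** Complementary recovery puts every encoded qubit j either in the wedge of R
    or in the wedge of R^c.  The second option is impossible for j in S: then R
    would support a logical projector onto |1> of qubit j, while dressed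
    cleanability puts on R^c a logical X_j (x) P_J, which flips that qubit; but
    operators with disjoint supports commute, and so do their logical images.
    Hence R is correctable with respect to each single j in S, and
    correctability is stable under disjoint unions of logical subsystems. *)

Section Labels.

Variable m : nat.
Implicit Types (T : {set 'I_m}) (x y : 'I_(2 ^ m)).

Lemma eq_from_odd_divn_exp2 (a b : nat) : (a < 2 ^ m)%N -> (b < 2 ^ m)%N ->
  (forall q, (q < m)%N -> odd (a %/ 2 ^ q) = odd (b %/ 2 ^ q)) -> a = b.
Proof.
elim: m a b => [|k IHk] a b; first by rewrite expn0 !ltnS !leqn0 => /eqP-> /eqP->.
move=> ltak ltbk eq_bits.
have halfE c : (c < 2 ^ k.+1)%N -> (c./2 < 2 ^ k)%N.
  by move=> ltck; rewrite -divn2 ltn_divLR // -expnSr.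
have := eq_bits 0%N isT; rewrite !expn0 !divn1 => eq_odd.
rewrite -(odd_double_half a) -(odd_double_half b) eq_odd (IHk a./2 b./2) ?halfE //.
by move=> q ltqk; rewrite -!divn2 -!divnMA -expnS; apply: eq_bits.
Qed.

Lemma qbit_inj x y : (forall q, qbit x q = qbit y q) -> x = y.
Proof.
move=> eq_bits; apply/val_inj/eq_from_odd_divn_exp2 => [||q ltqm]; rewrite ?ltn_ord //.
exact: (eq_bits (Ordinal ltqm)).
Qed.

Lemma exists_qbit_inverse :
  exists lab : {ffun 'I_m -> bool} -> 'I_(2 ^ m), forall w q, qbit (lab w) q = w q.
Proof.
pose bits x : {ffun 'I_m -> bool} := [ffun q => qbit x q].
have bits_inj : injective bits.
  by move=> x y /ffunP eq_bits; apply: qbit_inj => q; have := eq_bits q; rewrite !ffunE.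
have [|lab _ labK] := @inj_card_bij _ _ bits bits_inj.
  by rewrite card_ffun !card_ord card_bool.
by exists lab => w q; rewrite -[in RHS](labK w) ffunE.
Qed.

Lemma maskE T x q : mask T x q = (q \in T) && qbit x q.
Proof. by rewrite ffunE. Qed.

Lemma eq_maskP T x y :
  reflect (forall q, q \in T -> qbit x q = qbit y q) (mask T x == mask T y).
Proof.
apply: (iffP eqP) => [eq_xy q qT | eq_xy].
  by have /ffunP/(_ q) := eq_xy; rewrite !maskE qT.
by apply/ffunP => q; rewrite !maskE; case: (boolP (q \in T)) => //= /eq_xy.
Qed.

Lemma eq_mask_split T x y :
  (x == y) = (mask T x == mask T y) && (mask (~: T) x == mask (~: T) y).
Proof.
apply/eqP/andP => [-> // | [/eq_maskP eqT /eq_maskP eqTc]].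
apply: qbit_inj => q; case: (boolP (q \in T)) => qT; first exact: eqT.
by apply: eqTc; rewrite inE.
Qed.

End Labels.

Section Tensor.

Variable m : nat.
Implicit Types (T : {set 'I_m}) (M N : 'M[algC]_(2 ^ m)) (f g : subop m).

Lemma mulmx_tensor_disjoint T1 T2 M N f g :
  [disjoint T1 & T2] -> is_tensor T1 M f (@id_op m) -> is_tensor T2 N g (@id_op m) ->
  forall x y, (M *m N) x y = f (mask T1 x) (mask T1 y) * g (mask T2 x) (mask T2 y) *
     (mask (~: (T1 :|: T2)) x == mask (~: (T1 :|: T2)) y)%:R.
Proof.
move=> T12 tM tN x y; rewrite mxE.
have [lab qbit_lab] := exists_qbit_inverse m.
pose z0 := lab [ffun q => if q \in T1 then qbit y q else qbit x q].
have z0E q : qbit z0 q = if q \in T1 then qbit y q else qbit x q.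
  by rewrite qbit_lab ffunE.
have linkE z : (mask (~: T1) x == mask (~: T1) z) && (mask (~: T2) z == mask (~: T2) y)
    = (z == z0) && (mask (~: (T1 :|: T2)) x == mask (~: (T1 :|: T2)) y).
  apply/andP/andP => [[/eq_maskP xz /eq_maskP zy] | [/eqP-> /eq_maskP xy]].
    split; first apply/eqP/qbit_inj => q.
      rewrite z0E; case: ifP => qT1; first by apply: zy; rewrite inE (disjointFr T12).
      by apply/esym/xz; rewrite inE qT1.
    apply/eq_maskP => q; rewrite !inE negb_or => /andP[qT1 qT2].
    by rewrite xz ?zy // inE.
  split; apply/eq_maskP => q; rewrite inE z0E => qT; first by rewrite (negbTE qT).
  by case: ifP => // qT1; apply: xy; rewrite !inE qT1.
have z0T1 : mask T1 z0 = mask T1 y by apply/eqP/eq_maskP => q qT1; rewrite z0E qT1.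
have z0T2 : mask T2 z0 = mask T2 x.
  by apply/eqP/eq_maskP => q qT2; rewrite z0E (disjointFl T12 qT2).
under eq_bigr => z _ do rewrite tM tN /id_op mulrACA -natrM mulnb linkE.
rewrite (bigD1 z0) //= eqxx z0T1 z0T2 big1 ?addr0 // => z /negbTE->.
by rewrite mulr0.
Qed.

Lemma supported_on_disjoint_commute T1 T2 M N :
  [disjoint T1 & T2] -> supported_on T1 M -> supported_on T2 N -> M *m N = N *m M.
Proof.
move=> T12 [f tM] [g tN]; have T21 : [disjoint T2 & T1] by rewrite disjoint_sym.
apply/matrixP => x y.
by rewrite (mulmx_tensor_disjoint T12 tM tN) (mulmx_tensor_disjoint T21 tN tM) setUC
  [f _ _ * _]mulrC.
Qed.

(* Reindexing by z |-> z xor (x off T) moves the intermediate labels between x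
   and y onto the labels vanishing off T, which no longer depend on x. *)
Lemma mulmx_tensor T M N f g :
  is_tensor T M f (@id_op m) -> is_tensor T N g (@id_op m) ->
  is_tensor T (M *m N) (fun u v => \sum_(z | mask (~: T) z == [ffun=> false])
      f u (mask T z) * g (mask T z) v) (@id_op m).
Proof.
move=> tM tN x y; rewrite mxE /id_op.
under eq_bigr => z _ do rewrite tM tN /id_op mulrACA -natrM mulnb.
have [xy | xy] := eqVneq (mask (~: T) x) (mask (~: T) y); last first.
  rewrite mulr0 big1 // => z _; case: andP => [[/eqP xz /eqP zy] | _]; last by rewrite mulr0.
  by rewrite xz zy eqxx in xy.
have [lab qbit_lab] := exists_qbit_inverse m.
pose c := mask (~: T) x; pose flip z := lab [ffun q => qbit z q (+) c q].
have qbit_flip z q : qbit (flip z) q = qbit z q (+) c q by rewrite qbit_lab ffunE.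
have flipK : involutive flip.
  by move=> z; apply: qbit_inj => q; rewrite !qbit_flip addbK.
rewrite mulr1 (reindex_inj (inv_inj flipK)) [RHS]big_mkcond /=; apply: eq_bigr => z _.
have flipT : mask T (flip z) = mask T z.
  by apply/ffunP => q; rewrite !maskE qbit_flip maskE inE; case: (q \in T); rewrite ?addbF.
have flipTc : mask (~: T) x == mask (~: T) (flip z) = (mask (~: T) z == [ffun=> false]).
  apply/eq_maskP/eqP => [xz | /ffunP z0 q qTc]; last first.
    by have := z0 q; rewrite !ffunE qTc qbit_flip maskE qTc /= => ->.
  apply/ffunP => q; rewrite !ffunE; case qTc: (q \in ~: T) => //=.
  by have := xz q qTc; rewrite qbit_flip maskE qTc; case: (qbit z q); case: (qbit x q).
by rewrite flipT -xy [_ == mask _ x]eq_sym andbb flipTc; case: ifP; rewrite ?mulr1 ?mulr0.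
Qed.

Lemma supported_on0 T : supported_on T 0.
Proof. by exists (fun _ _ => 0) => x y; rewrite mxE mul0r. Qed.

Lemma supported_onD T M N : supported_on T M -> supported_on T N -> supported_on T (M + N).
Proof.
by move=> [f tM] [g tN]; exists (fun u v => f u v + g u v) => x y; rewrite mxE tM tN mulrDl.
Qed.

Lemma supported_onM T M N : supported_on T M -> supported_on T N -> supported_on T (M *m N).
Proof. by move=> [f tM] [g tN]; eexists; apply: mulmx_tensor tM tN. Qed.

Lemma supported_on_scalar T c : supported_on T c%:M.
Proof.
exists (fun u v => c * (u == v)%:R) => x y.
by rewrite mxE (eq_mask_split T) /id_op -mulrA -natrM mulnb mulr_natr.
Qed.

End Tensor.

Section CodeSpace.

Variables (n nL : nat) (V : 'M[algC]_(2 ^ n, 2 ^ nL)).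

Lemma CSP0 : CSP V 0.
Proof. by rewrite /CSP mul0mx mulmx0. Qed.

Lemma CSPD A B : CSP V A -> CSP V B -> CSP V (A + B).
Proof. by rewrite /CSP => cA cB; rewrite mulmxDl mulmxDr cA cB. Qed.

Lemma CSPM A B : CSP V A -> CSP V B -> CSP V (A *m B).
Proof. by rewrite /CSP => cA cB; rewrite -mulmxA cB mulmxA cA -mulmxA. Qed.

Lemma CSP_scalar c : CSP V c%:M.
Proof. by rewrite /CSP mul_mx_scalar mul_scalar_mx. Qed.

Hypothesis isoV : adj V *m V = 1%:M.

Lemma logicalM A B : CSP V B ->
  adj V *m (A *m B) *m V = (adj V *m A *m V) *m (adj V *m B *m V).
Proof.
move=> cB; have BV : B *m V = V *m adj V *m B *m V by rewrite -cB -!mulmxA isoV mulmx1.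
by rewrite -mulmxA -(mulmxA A) BV !mulmxA.
Qed.

End CodeSpace.

Lemma commute_diag_mx_entry (F : idomainType) k (A : 'M[F]_k) (d : 'rV_k) i j :
  A *m diag_mx d = diag_mx d *m A -> d 0 i != d 0 j -> A i j = 0.
Proof.
move=> /matrixP/(_ i j); rewrite mul_mx_diag mul_diag_mx !mxE => Ad dij.
apply/eqP; have : A i j * (d 0 j - d 0 i) == 0 by rewrite mulrBr Ad mulrC subrr.
by rewrite mulf_eq0 subr_eq0 [d 0 j == _]eq_sym (negbTE dij) orbF.
Qed.

Lemma pauli_op_neq0 m (T : {set 'I_m}) k (a b u v : {ffun 'I_m -> bool}) :
  (forall q, q \in T -> u q = v q (+) a q) -> pauli_op T k a b u v != 0.
Proof.
move=> uv; rewrite /pauli_op mulf_neq0 ?expf_neq0 ?neq0Ci //.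
by apply/prodf_neq0 => q qT; rewrite uv // eqxx mul1r signr_eq0.
Qed.

Lemma dressed_cleanable_not_in_wedge n nL (V : 'M[algC]_(2 ^ n, 2 ^ nL))
    (R : {set 'I_n}) (S : {set 'I_nL}) j :
  adj V *m V = 1%:M -> j \in S -> dressed_cleanable V R S -> ~ in_wedge V R j.
Proof.
move=> isoV jS clean wedge.
have [kJ [aJ [bJ [A [cA suppA tA]]]]] := clean 0%N [ffun q => q == j] [ffun=> false].
have [B [cB suppB tB]] := wedge (fun u v => (u == v)%:R * (v j)%:R).
rewrite setCK in suppB.
pose d : 'rV[algC]_(2 ^ nL) := \row_y (qbit y j)%:R.
have logB : adj V *m B *m V = diag_mx d.
  apply/matrixP => z y; rewrite tB /id_op !mxE (eq_mask_split [set j]) maskE set11 /=.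
  case: (boolP (mask _ z == _)) => [/eq_maskP zy | _]; last by rewrite !mul0r.
  by rewrite (zy j (set11 j)) mul1r mulr_natr.
have commAB : adj V *m A *m V *m diag_mx d = diag_mx d *m (adj V *m A *m V).
  rewrite -logB -!logicalM // (supported_on_disjoint_commute _ suppA suppB) //.
  by rewrite disjoints_subset.
have [lab qbit_lab] := exists_qbit_inverse nL.
pose x := lab [ffun q => if q \in S then q == j else aJ q].
pose y := lab [ffun=> false].
have dxy : d 0 x != d 0 y by rewrite !mxE !qbit_lab !ffunE jS eqxx oner_neq0.
apply/eqP: (commute_diag_mx_entry commAB dxy).
rewrite tA mulf_neq0 // pauli_op_neq0 // => q qS; rewrite !maskE qS !qbit_lab !ffunE /=.
  by rewrite qS.
by rewrite inE in qS; rewrite (negbTE qS).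
Qed.

Section Correctable.

Variables (n nL : nat) (V : 'M[algC]_(2 ^ n, 2 ^ nL)) (R : {set 'I_n}).
Hypothesis isoV : adj V *m V = 1%:M.

Lemma correctable0 : correctable V R set0.
Proof.
move=> AL; pose c := AL [ffun=> false] [ffun=> false].
exists c%:M; split; [exact: CSP_scalar | exact: supported_on_scalar |].
rewrite mul_mx_scalar -scalemxAl isoV scalemx1 => x y.
have mask0 z : mask set0 z = [ffun=> false] by apply/ffunP => q; rewrite maskE inE ffunE.
by rewrite mxE (eq_mask_split set0) /id_op !mask0 eqxx mulr_natr.
Qed.

(* An operator AL on T1 u T2 is the sum, over pairs pq of labels of T2, of the
   slices of AL at pq on T1 tensored with the matrix unit |pq.1><pq.2| on T2. *)
Lemma correctableU (T1 T2 : {set 'I_nL}) : [disjoint T1 & T2] ->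
  correctable V R T1 -> correctable V R T2 -> correctable V R (T1 :|: T2).
Proof.
move=> T12 corr1 corr2 AL.
pose glue (p w : {ffun 'I_nL -> bool}) := [ffun q => if q \in T2 then p q else w q].
pose slice (pq : {ffun 'I_nL -> bool} * {ffun 'I_nL -> bool}) : subop nL :=
  fun u v => AL (glue pq.1 u) (glue pq.2 v).
pose unit pq : subop nL := fun u v => ((u, v) == pq)%:R.
have [A tA] := fin_all_exists (fun pq => corr1 (slice pq)).
have [B tB] := fin_all_exists (fun pq => corr2 (unit pq)).
exists (\sum_pq A pq *m B pq); split.
- apply: (big_ind (CSP V)); [exact: CSP0 | exact: CSPD | move=> pq _].
  by case: (tA pq) (tB pq) => cA _ _ [cB _ _]; apply: CSPM.
- apply: (big_ind (supported_on (~: R))); [exact: supported_on0 | exact: supported_onD |].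
  by move=> pq _; case: (tA pq) (tB pq) => _ sA _ [_ sB _]; apply: supported_onM.
move=> x y; rewrite mulmx_sumr mulmx_suml summxE.
under eq_bigr => pq _.
  case: (tA pq) (tB pq) => _ _ lA [cB _ lB].
  rewrite logicalM // (mulmx_tensor_disjoint T12 lA lB).
  over.
rewrite -big_distrl /= /id_op; congr (_ * _).
rewrite (bigD1 (mask T2 x, mask T2 y)) //= big1 ?addr0; last first.
  by move=> pq; rewrite /unit eq_sym => /negbTE->; rewrite mulr0.
have glueE z : glue (mask T2 z) (mask T1 z) = mask (T1 :|: T2) z.
  apply/ffunP => q; rewrite !ffunE !inE.
  by case: (boolP (q \in T2)) => qT2; rewrite ?orbT ?orbF.
by rewrite /unit eqxx mulr1 /slice /= !glueE.
Qed.

Lemma correctable_from_singletons (S : {set 'I_nL}) :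
  (forall j, j \in S -> correctable V R [set j]) -> correctable V R S.
Proof.
move=> corr_j; rewrite -(set_enum S).
have : {subset enum S <= S} by move=> j; rewrite mem_enum.
elim: (enum S) (enum_uniq S) => [_ _ | j s IHs /andP[js us] sS].
  by rewrite set_nil; apply: correctable0.
rewrite set_cons; apply: correctableU; first by rewrite disjoints1 inE.
  by apply/corr_j/sS; rewrite inE eqxx.
by apply: IHs => // q qs; apply: sS; rewrite inE qs orbT.
Qed.

End Correctable.

Theorem lemma6 (n nL : nat) (G : 'M[algC]_(2 ^ n) -> Prop)
    (V : 'M[algC]_(2 ^ n, 2 ^ nL)) (S : {set 'I_nL}) (R : {set 'I_n}) :
  stabilizer_group G -> encoding G V ->
  complementary_recovery V R -> dressed_cleanable V R S ->
  correctable V R S.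
Proof.
move=> _ [isoV _ _] recovery clean; apply: (correctable_from_singletons isoV) => j jS.
have [|] := recovery j; first by move/(dressed_cleanable_not_in_wedge isoV jS clean).
by rewrite /in_wedge setCK.
Qed.
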